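(* For integers $n \ge k \ge 1$, let $\Gamma(n,k)$ denote the maximum number of edges of a (simple, undirected) graph $G$ on $n$ vertices, taken over all such graphs $G$ together with $k$ vertex-disjoint directed paths $P_1,\ldots,P_k$ in $G$ covering $V(G)$, subject to the constraint that the digraph $D(G,P_1,\ldots,P_k)$ is acyclic. Then $\Gamma(n,k) = kn - \binom{k+1}{2}$ for all integers $n \ge k \ge 1$.
   Context: Graphs are finite, simple and undirected; $xy$ denotes an edge and $y \sim z$ means $y$ and $z$ are adjacent in $G$. A directed path in $G$ is a sequence $v_1 \to v_2 \to \cdots \to v_m$ ($m \ge 1$; a path with $m=1$ is trivial) of distinct vertices of $G$ with $v_t v_{t+1} \in E(G)$ for each $t$; its arcs are $v_t \to v_{t+1}$. The paths $P_1,\ldots,P_k$ are vertex-disjoint and cover $V(G)$, i.e. every vertex of $G$ lies in exactly one $P_j$. The digraph $D = D(G,P_1,\ldots,P_k)$ has vertex set $V(G)$, and for distinct vertices $x,y$ there is an arc $x \to y$ in $D$ if and only if either some path $P_j$ contains the arc $x \to y$, or there is a vertex $z$ and a path $P_j$ such that $x \to z$ is an arc of $P_j$ and $y \sim z$ in $G$. $D$ is acyclic if it contains no directed cycle. *)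

From mathcomp Require Import all_boot.
Set Implicit Arguments. Unset Strict Implicit. Unset Printing Implicit Defensive.

Definition simple_graph (n : nat) (e : rel 'I_n) : Prop :=
  (forall x y, e x y = e y x) /\ (forall x, ~~ e x x).

Definition num_edges (n : nat) (e : rel 'I_n) : nat :=
  #|[set p : 'I_n * 'I_n | e p.1 p.2 && (p.1 < p.2)%N]|.

Definition path_arc (T : Type) (s : seq T) (x y : T) : Prop :=
  exists s1 s2, s = s1 ++ x :: y :: s2.

Definition is_dpath (n : nat) (e : rel 'I_n) (s : seq 'I_n) : Prop :=
  s <> [::] /\ uniq s /\ (forall x y, path_arc s x y -> e x y).

Definition path_cover (n k : nat) (e : rel 'I_n) (P : 'I_k -> seq 'I_n) : Prop :=
  (forall j, is_dpath e (P j)) /\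
  (forall v : 'I_n, exists! j : 'I_k, v \in P j).

Definition D_arc (n k : nat) (e : rel 'I_n) (P : 'I_k -> seq 'I_n) (x y : 'I_n) : Prop :=
  x <> y /\
  ((exists j, path_arc (P j) x y) \/
   (exists z j, path_arc (P j) x z /\ e y z)).

Definition directed_cycle (T : eqType) (A : T -> T -> Prop) (s : seq T) : Prop :=
  match s with
  | [::] => False
  | x0 :: _ => uniq s /\
      forall i, (i < size s)%N -> A (nth x0 s i) (nth x0 s ((i.+1) %% size s))
  end.

Definition acyclic (T : eqType) (A : T -> T -> Prop) : Prop :=
  forall s : seq T, ~ directed_cycle A s.

Definition admissible (n k : nat) (e : rel 'I_n) (P : 'I_k -> seq 'I_n) : Prop :=
  simple_graph e /\ path_cover e P /\ acyclic (D_arc e P).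

From mathcomp Require Import all_boot zify.
From Stdlib Require Import ClassicalEpsilon.
Set Implicit Arguments. Unset Strict Implicit. Unset Printing Implicit Defensive.

(* Upper bound: the acyclic digraph D has a topological order r. If b1 and b2
   are neighbours of a lying after a in this order and b1 precedes b2 on the
   same path P_j, then the predecessor x of b2 on P_j has the arc x -> a in D
   (as a ~ b2), while b1 reaches x along P_j; so b1 would come before a.  Hence
   each vertex has at most one later neighbour per path, i.e. at most
   min(k, #later vertices) of them, and summing over the order gives
   sum_(i < n) min(k, i) = kn - C(k+1, 2).
   Lower bound: join two of 0, ..., n-1 when they differ by at most k, and take
   the residue classes mod k as increasing paths; every arc of D increases the
   label, and the edge count is the same sum. *)

Lemma path_arc_nth (T : Type) (x0 : T) (s : seq T) x y :
  path_arc s x y -> exists2 i, i.+1 < size s & x = nth x0 s i /\ y = nth x0 s i.+1.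
Proof.
case=> s1 [s2 ->]; exists (size s1); first by rewrite size_cat /=; lia.
by rewrite !nth_cat ltnn subnn ltnNge leqnSn subSn //= subnn.
Qed.

Lemma nth_path_arc (T : Type) (x0 : T) (s : seq T) i :
  i.+1 < size s -> path_arc s (nth x0 s i) (nth x0 s i.+1).
Proof.
move=> hi; exists (take i s), (drop i.+2 s).
by rewrite -[s in LHS](cat_take_drop i) (drop_nth x0) ?(drop_nth x0 (n:=i.+1)) // ltnW.
Qed.

Lemma path_arc_neq (T : eqType) (s : seq T) x y : uniq s -> path_arc s x y -> x != y.
Proof.
by move=> + [s1 [s2 def_s]]; rewrite def_s cat_uniq /= inE => /and3P[_ _ /andP[/norP[]]].
Qed.

Lemma path_arc_mono_nth (T : Type) (x0 : T) (s : seq T) (r : T -> nat) i j :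
  (forall x y, path_arc s x y -> r x < r y) -> i <= j < size s ->
  r (nth x0 s i) <= r (nth x0 s j).
Proof.
move=> mono /andP[]; elim: j => [|j IHj]; first by rewrite leqn0 => /eqP->.
rewrite leq_eqVlt => /orP[/eqP-> //| /IHj le_ij lt_js].
exact/(leq_trans (le_ij (ltnW lt_js)))/ltnW/mono/nth_path_arc.
Qed.

Lemma acyclic_of_rank (T : eqType) (A : T -> T -> Prop) (r : T -> nat) :
  (forall x y, A x y -> r x < r y) -> acyclic A.
Proof.
move=> mono [|x0 s] //= [_ cyc].
have le_r0 i : i < size (x0 :: s) -> r x0 <= r (nth x0 (x0 :: s) i).
  elim: i => [|i IHi] // lt_is.
  have := cyc i (ltnW lt_is); rewrite modn_small // => /mono.
  by move/(leq_ltn_trans (IHi (ltnW lt_is)))/ltnW.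
have := cyc (size s) (ltnSn _); rewrite modnn => /mono.
by rewrite ltnNge le_r0.
Qed.

Lemma acyclic_connect (T : finType) (A : T -> T -> Prop) (B : rel T) x y :
  (forall x y, B x y -> A x y) -> acyclic A -> B x y -> ~~ connect B y x.
Proof.
move=> BA acyc Bxy; apply/negP => /connectP[p Bp def_x].
case: (shortenP Bp) def_x => q Bq uniq_q _ def_x.
apply: (acyc (y :: q)); split=> // i lt_iq.
have [lt_i1q | ] := ltnP i.+1 (size (y :: q)).
  by rewrite modn_small //; apply/BA/(pathP y Bq).
rewrite leq_eqVlt ltnNge lt_iq orbF => /eqP[<-]; apply: BA.
by rewrite modnn -last_nth -def_x.
Qed.

Lemma acyclic_topological_rank (T : finType) (A : T -> T -> Prop) :
  acyclic A -> exists r : T -> nat, injective r /\ forall x y, A x y -> r x < r y.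
Proof.
move=> acyc; pose B x y : bool := excluded_middle_informative (A x y).
have BP x y : reflect (A x y) (B x y) := sumboolP _.
have BA x y : B x y -> A x y := elimT (BP x y).
pose anc x := [set w | connect B w x].
(* The number of ancestors increases along arcs; enum_rank breaks the ties. *)
exists (fun x => #|anc x| * #|T| + enum_rank x); split.
  move=> x y /(congr1 (modn^~ #|T|)).
  by rewrite !modnMDl !modn_small // => /val_inj/enum_rank_inj.
move=> x y /BP Bxy; have lt_anc : #|anc x| < #|anc y|.
  apply/proper_card/properP; split.
    by apply/subsetP=> w; rewrite !inE => /connect_trans; apply; apply: connect1.
  by exists y; rewrite !inE ?connect0 // (acyclic_connect BA acyc Bxy).
rewrite (leq_trans _ (leq_addr _ _)) // (leq_trans _ (leq_mul lt_anc (leqnn _))) //.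
by rewrite mulSn addnC ltn_add2r.
Qed.

Lemma card_pairs (T : finType) (Q : rel T) :
  #|[set p : T * T | Q p.1 p.2]| = \sum_a #|[set b | Q a b]|.
Proof.
rewrite -sum1dep_card -(pair_big_dep xpredT Q (fun _ _ => 1)) /=.
by apply: eq_bigr => a _; rewrite sum1dep_card.
Qed.

Lemma card_oriented_pairs (T : finType) (e : rel T) (r1 r2 : T -> nat) :
  symmetric e -> injective r1 -> injective r2 ->
  #|[set p : T * T | e p.1 p.2 && (r1 p.1 < r1 p.2)]| =
  #|[set p : T * T | e p.1 p.2 && (r2 p.1 < r2 p.2)]|.
Proof.
move=> e_sym.
suff le_oriented r r' : injective r -> injective r' ->
    #|[set p : T * T | e p.1 p.2 && (r p.1 < r p.2)]| <=
    #|[set p : T * T | e p.1 p.2 && (r' p.1 < r' p.2)]|.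
  by move=> r1_inj r2_inj; apply/anti_leq; rewrite !le_oriented.
move=> r_inj r'_inj.
pose orient (p : T * T) := if r' p.1 < r' p.2 then p else (p.2, p.1).
rewrite -(card_in_imset (f := orient)).
  apply/subset_leq_card/subsetP=> _ /imsetP[[x y] + ->].
  rewrite !inE /orient /= => /andP[exy lt_xy]; case: ltnP => [-> | le_yx] /=.
    by rewrite exy.
  rewrite e_sym exy ltn_neqAle le_yx andbT /=.
  by apply: contraTneq lt_xy => /r'_inj->; rewrite ltnn.
move=> [x y] [x' y']; rewrite !inE /orient /= => /andP[_ lt_xy] /andP[_ lt_xy'].
by do 2!case: ifP => _; case=> eq1 eq2; rewrite ?eq1 ?eq2 in lt_xy lt_xy' * => //;
  move: (ltn_trans lt_xy lt_xy'); rewrite ltnn.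
Qed.

Section LaterVertices.

Variables (T : finType) (r : T -> nat).

Definition later a := [set b | r a < r b].

Lemma card_later_lt a : #|later a| < #|T|.
Proof.
rewrite -cardsT; apply/proper_card/properP; split; first exact: subsetT.
by exists a; rewrite !inE ?ltnn.
Qed.

Lemma card_later_ltr a b : r a < r b -> #|later b| < #|later a|.
Proof.
move=> lt_ab; apply/proper_card/properP; split.
  by apply/subsetP=> c; rewrite !inE; apply: ltn_trans.
by exists b; rewrite !inE ?ltnn.
Qed.

Hypothesis r_inj : injective r.

Lemma card_later_inj : injective (fun a => #|later a|).
Proof.
move=> a b /= eq_ab.
by case: (ltngtP (r a) (r b)) => [||/r_inj //] /card_later_ltr; rewrite eq_ab ltnn.
Qed.

Lemma sum_card_later (g : nat -> nat) : \sum_a g #|later a| = \sum_(0 <= i < #|T|) g i.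
Proof.
pose rank a : 'I_#|T| := Ordinal (card_later_lt a).
have rank_bij : bijective rank.
  by apply: inj_card_bij; [move=> a b /(congr1 val)/card_later_inj | rewrite card_ord].
by rewrite big_mkord (reindex rank) //; apply: onW_bij.
Qed.

End LaterVertices.

Lemma sum_minn_bin k m : k <= m -> \sum_(0 <= i < m) minn k i + 'C(k.+1, 2) = k * m.
Proof.
elim: m => [|m IHm]; first by rewrite leqn0 => /eqP->; rewrite big_geq.
rewrite leq_eqVlt => /orP[/eqP def_k|].
  rewrite -def_k (eq_big_nat _ _ (F2 := id)); last first.
    by move=> i /andP[_ /ltnW/minn_idPr].
  rewrite bin2_sum binS bin1.
  by have := mul_bin_diag k 1; rewrite bin1; case: (k) => //= k'; nia.
rewrite ltnS big_nat_recr //= => /[dup] le_km /IHm; rewrite (minn_idPl le_km) mulnS.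
by rewrite addnAC => ->; rewrite addnC.
Qed.

Lemma card_ord_interval n a k : #|[set b : 'I_n | a < b <= a + k]| = minn k (n - a.+1).
Proof.
rewrite -sum1dep_card big_mkcond /=.
rewrite -(big_mkord xpredT (fun b => if a < b <= a + k then 1 else 0)).
elim: n => [|n IHn]; first by rewrite big_geq.
by rewrite big_nat_recr //= IHn; case: (ltnP a n); case: (leqP n (a + k)) => /=; lia.
Qed.

Section UpperBound.

Variables (n k : nat) (e : rel 'I_n) (P : 'I_k -> seq 'I_n) (r : 'I_n -> nat).
Hypothesis cover : path_cover e P.
Hypothesis r_mono : forall x y, D_arc e P x y -> r x < r y.

Lemma path_arc_rank_lt j x y : path_arc (P j) x y -> r x < r y.
Proof.
have [/(_ j)[_ [uniq_Pj _]] _] := cover.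
by move=> arc_xy; apply: r_mono; split; [apply/eqP/(path_arc_neq uniq_Pj) | left; exists j].
Qed.

Lemma later_neighbours_on_path_eq a j b1 b2 :
  b1 \in P j -> b2 \in P j -> e a b1 -> e a b2 -> r a < r b1 -> r a < r b2 -> b1 = b2.
Proof.
wlog lt_12 : b1 b2 / index b1 (P j) < index b2 (P j).
  move=> wlog_lt Pb1 Pb2 eab1 eab2 lt_a1 lt_a2.
  case: (ltngtP (index b1 (P j)) (index b2 (P j))) => [lt_12|lt_21|eq_12].
  - exact: wlog_lt.
  - by apply/esym/wlog_lt.
  - by rewrite -(nth_index a Pb1) eq_12 nth_index.
move=> Pb1 Pb2 _ eab2 lt_a1 _.
move def_i: (index b2 (P j)) lt_12 => [//|i] lt_1i.
have lt_iP : i.+1 < size (P j) by rewrite -def_i index_mem.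
pose x := nth a (P j) i.
have le_1x : r b1 <= r x.
  rewrite -(nth_index a Pb1); apply: path_arc_mono_nth; first exact: path_arc_rank_lt.
  by rewrite -ltnS lt_1i ltnW.
have le_xa : r x <= r a.
  have [-> //|neq_xa] := eqVneq x a.
  apply/ltnW/r_mono; split; first exact/eqP.
  right; exists b2, j; split=> //.
  by rewrite -(nth_index a Pb2) def_i; apply: nth_path_arc.
by have := leq_trans le_1x le_xa; rewrite leqNgt lt_a1.
Qed.

Lemma card_later_neighbours a : #|[set b | e a b && (r a < r b)]| <= k.
Proof.
have [_ /(_ a)[j0 _]] := cover.
pose path_of b := odflt j0 [pick j | b \in P j].
have path_ofP b : b \in P (path_of b).
  rewrite /path_of; case: pickP => [//|notin].
  by have [_ /(_ b)[j [Pbj _]]] := cover; rewrite notin in Pbj.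
rewrite -(card_ord k); apply: (@leq_card_in _ _ path_of) => b1 b2.
rewrite !inE => /andP[eab1 lt_a1] /andP[eab2 lt_a2] eq_path.
apply: (later_neighbours_on_path_eq (path_ofP b1) _ eab1 eab2 lt_a1 lt_a2).
by rewrite eq_path.
Qed.

End UpperBound.

Lemma num_edges_le n k (e : rel 'I_n) (P : 'I_k -> seq 'I_n) :
  k <= n -> admissible e P -> num_edges e <= k * n - 'C(k.+1, 2).
Proof.
move=> le_kn [[e_sym _] [cover acyc]].
have [r [r_inj r_mono]] := acyclic_topological_rank acyc.
rewrite /num_edges (card_oriented_pairs e_sym (@ord_inj n) r_inj).
rewrite (card_pairs (fun x y => e x y && (r x < r y))).
rewrite -(sum_minn_bin le_kn) addnK.
have := sum_card_later r_inj (minn k); rewrite card_ord => <-.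
apply: leq_sum => a _; rewrite leq_min (card_later_neighbours cover r_mono).
by apply/subset_leq_card/subsetP=> b; rewrite !inE => /andP[].
Qed.

Section BandGraph.

Variables (n k : nat).
Hypothesis k_gt0 : 0 < k.

Definition band_graph : rel 'I_n.+1 :=
  fun a b => (a != b) && (a <= b + k) && (b <= a + k).

Definition residue_path (r : 'I_k) : seq 'I_n.+1 :=
  [seq inord (r + i * k) | i <- iota 0 ((n - r) %/ k).+1].

Hypothesis le_kn : k <= n.+1.

Lemma residue_path_bound (r : 'I_k) i : (i <= (n - r) %/ k) = (r + i * k <= n).
Proof. by rewrite leq_divRL //; move: (ltn_ord r) => lt_rk; apply/idP/idP; lia. Qed.

Lemma nth_residue_path (r : 'I_k) i :
  i <= (n - r) %/ k -> nth ord0 (residue_path r) i = r + i * k :> nat.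
Proof.
move=> le_i; rewrite (nth_map 0) ?size_iota ?ltnS // nth_iota ?ltnS // add0n inordK //.
by rewrite ltnS -residue_path_bound.
Qed.

Lemma size_residue_path (r : 'I_k) : size (residue_path r) = ((n - r) %/ k).+1.
Proof. by rewrite size_map size_iota. Qed.

Lemma mem_residue_path (r : 'I_k) v : (v \in residue_path r) = (v %% k == r).
Proof.
apply/(nthP ord0)/eqP => [[i] | def_r].
  rewrite size_residue_path ltnS => /nth_residue_path + <- => ->.
  by rewrite addnC modnMDl modn_small.
have le_vk : v %/ k <= (n - r) %/ k by rewrite residue_path_bound -def_r addnC -divn_eq -ltnS.
exists (v %/ k); first by rewrite size_residue_path ltnS.
by apply: ord_inj; rewrite nth_residue_path // -def_r addnC -divn_eq.
Qed.

Lemma residue_path_arc (r : 'I_k) x y : path_arc (residue_path r) x y -> y = x + k :> nat.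
Proof.
case/(path_arc_nth ord0) => i; rewrite size_residue_path ltnS => lt_i [-> ->].
by rewrite !nth_residue_path // 1?ltnW // mulSn; lia.
Qed.

Lemma simple_band_graph : simple_graph band_graph.
Proof.
split=> [x y | x]; last by rewrite /band_graph eqxx.
by rewrite /band_graph eq_sym andbAC.
Qed.

Lemma residue_path_dpath r : is_dpath band_graph (residue_path r).
Proof.
split; first by case: (residue_path r) (size_residue_path r).
split.
  apply/(uniqP ord0) => i j; rewrite !inE size_residue_path !ltnS => le_i le_j.
  move/(congr1 (@nat_of_ord _)); rewrite !nth_residue_path // => /addnI/eqP.
  by rewrite eqn_pmul2r // => /eqP.
move=> x y /residue_path_arc def_y.
have neq_xy : x != y by apply/eqP=> eq_xy; rewrite eq_xy in def_y; lia.
by rewrite /band_graph neq_xy def_y /=; lia.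
Qed.

Lemma residue_path_cover : path_cover band_graph residue_path.
Proof.
split; first exact: residue_path_dpath.
move=> v; exists (Ordinal (ltn_pmod v k_gt0)); split; first by rewrite mem_residue_path.
by move=> r; rewrite mem_residue_path => /eqP def_r; apply: val_inj.
Qed.

Lemma band_graph_acyclic : acyclic (D_arc band_graph residue_path).
Proof.
apply: (acyclic_of_rank (r := @nat_of_ord n.+1)) => x y [neq_xy].
case=> [[r /residue_path_arc->] | [z [r [/residue_path_arc def_z]]]]; first lia.
have neq_xy' : x != y :> nat by apply: contra_not_neq neq_xy => /ord_inj.
by rewrite /band_graph def_z => /andP[_]; lia.
Qed.

Lemma band_graph_admissible : admissible band_graph residue_path.
Proof.
split; first exact: simple_band_graph.
by split; [exact: residue_path_cover | exact: band_graph_acyclic].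
Qed.

Lemma num_edges_band_graph : num_edges band_graph = k * n.+1 - 'C(k.+1, 2).
Proof.
rewrite /num_edges (card_pairs (fun a b => band_graph a b && (a < b))).
rewrite -(sum_minn_bin le_kn) addnK big_mkord [RHS](reindex_inj rev_ord_inj) /=.
apply: eq_bigr => a _; rewrite -card_ord_interval; apply: eq_card => b; rewrite !inE.
apply/andP/andP => [[/andP[/andP[_ _] le_ba] lt_ab] | [lt_ab le_ba]] //.
have neq_ab : a != b by apply: contraTneq lt_ab => ->; rewrite ltnn.
by rewrite /band_graph neq_ab le_ba andbT (leq_trans (ltnW lt_ab)) ?leq_addr.
Qed.

End BandGraph.

Theorem theorem1 (n k : nat) (hk : (1 <= k)%N) (hkn : (k <= n)%N) :
  (exists (e : rel 'I_n) (P : 'I_k -> seq 'I_n),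
      admissible e P /\ num_edges e = (k * n - 'C(k.+1, 2))%N) /\
  (forall (e : rel 'I_n) (P : 'I_k -> seq 'I_n),
      admissible e P -> (num_edges e <= k * n - 'C(k.+1, 2))%N).
Proof.
split; last by move=> e P; apply: num_edges_le.
case: n hkn => [|n] hkn; first by case: k hk hkn.
exists (@band_graph n k), (@residue_path n k).
by split; [exact: band_graph_admissible | exact: num_edges_band_graph].
Qed.
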